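(* Let $F$ be a field of characteristic two and let $\mathfrak b$ be a bilinear $n$-fold Pfister form over $F$. If $\alpha\in Q(\mathfrak b)\setminus F^2$, then $\mathfrak i(\mathfrak b_{F(\sqrt\alpha)})=\mathfrak i(\mathfrak b)+1$.
   Context: A bilinear $n$-fold Pfister form is $\langle\!\langle\alpha_1,\dots,\alpha_n\rangle\!\rangle=\langle1,\alpha_1\rangle\otimes\cdots\otimes\langle1,\alpha_n\rangle$ with $\alpha_i\in F^\times$; $\langle\!\langle1\rangle\!\rangle^r$ denotes $\langle\!\langle1,\dots,1\rangle\!\rangle$ ($r$-fold), $\langle\!\langle1\rangle\!\rangle^0=\langle1\rangle$. Every bilinear Pfister form $\mathfrak b$ is isometric to $\langle\!\langle1\rangle\!\rangle^r\otimes\mathfrak b'$ for some integer $r\ge0$ and anisotropic bilinear Pfister form $\mathfrak b'$; this $r$ is denoted $\mathfrak i(\mathfrak b)$. $Q(\mathfrak b)=\{\mathfrak b(v,v)\mid v\ne0\}\cup\{0\}$. $\mathfrak b_K$ denotes scalar extension to $K$. *)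

From HB Require Import structures.
From mathcomp Require Import all_boot all_order all_algebra.
Set Implicit Arguments. Unset Strict Implicit. Unset Printing Implicit Defensive.
Import Order.TTheory GRing.Theory Num.Theory.
Local Open Scope ring_scope.

(* A diagonal symmetric bilinear form <d_0, ..., d_{m-1}> on F^m is
   represented by the sequence d of its diagonal coefficients. *)

Definition diagf (F : fieldType) (d : seq F) : 'M[F]_(size d) :=
  diag_mx (\row_(i < size d) d`_i).

Definition bval (F : fieldType) (d : seq F) (v : 'rV[F]_(size d)) : F :=
  (v *m diagf d *m v^T) 0 0.

(* Bilinear Pfister form <<a_1,...,a_k>> = <1,a_1> (x) ... (x) <1,a_k>,
   as its (2^k) diagonal entries; <<>> = <1>. *)
Fixpoint pfister (F : fieldType) (s : seq F) : seq F :=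
  match s with
  | [::] => [:: 1]
  | a :: s' => pfister s' ++ map (fun x => a * x) (pfister s')
  end.

Definition isometric (F : fieldType) (d1 d2 : seq F) : Prop :=
  size d1 = size d2 /\
  exists P : 'M[F]_(size d1, size d2),
    row_free P /\ row_full P /\ P^T *m diagf d1 *m P = diagf d2.

Definition anisotropic (F : fieldType) (d : seq F) : Prop :=
  forall v : 'rV[F]_(size d), v != 0 -> bval v != 0.

Definition inQ (F : fieldType) (d : seq F) (x : F) : Prop :=
  x = 0 \/ exists v : 'rV[F]_(size d), v != 0 /\ bval v = x.

(* pfister_index d r  <->  d is isometric to <<1>>^r (x) b' with b' an
   anisotropic bilinear Pfister form, i.e. "i(d) = r". *)
Definition pfister_index (F : fieldType) (d : seq F) (r : nat) : Prop :=
  exists beta : seq F, all (fun x => x != 0) beta /\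
    anisotropic (pfister beta) /\ isometric d (pfister (nseq r 1 ++ beta)).

(* Write K = F(t) with t^2 = alpha. In characteristic 2 the value of a
   diagonal form d_K at p + t q is iota (d(p) + alpha d(q)), so d_K is
   anisotropic as soon as d _|_ alpha d is.
   Let b = <<y>> (x) c be anisotropic with c = <<a_2, ..., a_n>> and
   alpha = c(f1) + y c(f2); we show b_K ~ <<1>> (x) g with g anisotropic, by
   induction on n. If c(f2) = 0, alpha is a value of c and the decomposition
   for c extends to b. Otherwise take g = c_K: Pfister forms are round, and
   y c(f2) = c(f1) + t^2 is a nonzero value of c_K, so y c_K ~ c_K; by
   multiplicativity of the values of c, every value c(p) + alpha c(q) of
   c _|_ alpha c is a value of b, which makes c _|_ alpha c, hence c_K,
   anisotropic. For i(b) = r one applies this to the anisotropic part of b,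
   which represents the same elements as b in characteristic 2.
   The index is well defined since an anisotropic form whose coefficients are
   all represented by a form e has dimension at most dim e. *)

From HB Require Import structures.
From mathcomp Require Import all_boot all_order all_algebra.
From mathcomp Require Import ring.
Import GRing.Theory.
Local Open Scope ring_scope.

Set Implicit Arguments.
Unset Strict Implicit.

Section Congruence.
Variable F : fieldType.

Definition congruent m n (A : 'M[F]_m) (B : 'M[F]_n) : Prop :=
  exists P : 'M[F]_(m, n), [/\ row_free P, row_full P & P^T *m A *m P = B].

Lemma congruentP m n (A : 'M[F]_m) (B : 'M[F]_n) :
  congruent A B <-> exists (P : 'M_(m, n)) (Q : 'M_(n, m)),
    [/\ P *m Q = 1%:M, Q *m P = 1%:M & P^T *m A *m P = B].
Proof.
split=> [[P [/row_freeP[Q PQ] /row_fullP[Q' Q'P] E]]|[P [Q [PQ QP E]]]].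
  have QQ' : Q' = Q by rewrite -[Q']mulmx1 -PQ mulmxA Q'P mul1mx.
  by move: Q'P; rewrite QQ' => QP; exists P, Q.
by exists P; split=> //; [apply/row_freeP | apply/row_fullP]; exists Q.
Qed.

Lemma congruent_refl m (A : 'M[F]_m) : congruent A A.
Proof.
by apply/congruentP; exists 1%:M, 1%:M; rewrite !mulmx1 trmx1 mul1mx.
Qed.

Lemma congruent_sym m n (A : 'M[F]_m) (B : 'M[F]_n) :
  congruent A B -> congruent B A.
Proof.
move=> /congruentP[P [Q [PQ QP E]]]; apply/congruentP; exists Q, P; split=> //.
by rewrite -E !mulmxA -!trmx_mul -!mulmxA PQ trmx1 mul1mx mulmx1.
Qed.

Lemma congruent_trans m n p (A : 'M[F]_m) (B : 'M[F]_n) (C : 'M[F]_p) :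
  congruent A B -> congruent B C -> congruent A C.
Proof.
move=> /congruentP[P [P' [PP' P'P E]]] /congruentP[Q [Q' [QQ' Q'Q E']]].
apply/congruentP; exists (P *m Q), (Q' *m P'); split.
- by rewrite -mulmxA (mulmxA Q) QQ' mul1mx.
- by rewrite -mulmxA (mulmxA P') P'P mul1mx.
- by rewrite -E' -E trmx_mul !mulmxA.
Qed.

Lemma congruent_cast m m' n n' (em : m = m') (en : n = n')
    (A : 'M[F]_m) (B : 'M[F]_n) :
  congruent A B -> congruent (castmx (em, em) A) (castmx (en, en) B).
Proof. by case: m' / em; case: n' / en; rewrite !castmx_id. Qed.

Lemma congruent_block m1 m2 n1 n2 (A1 : 'M[F]_m1) (A2 : 'M[F]_m2)
    (B1 : 'M[F]_n1) (B2 : 'M[F]_n2) :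
  congruent A1 B1 -> congruent A2 B2 ->
  congruent (block_mx A1 0 0 A2) (block_mx B1 0 0 B2).
Proof.
move=> /congruentP[P [P' [PP' P'P E]]] /congruentP[Q [Q' [QQ' Q'Q E']]].
apply/congruentP; exists (block_mx P 0 0 Q), (block_mx P' 0 0 Q').
by rewrite tr_block_mx !trmx0 !mulmx_block !mulmx0 !mul0mx !addr0 !add0r
  !mul0mx PP' P'P QQ' Q'Q E E' -!scalar_mx_block.
Qed.

Lemma congruent_scale m n (A : 'M[F]_m) (B : 'M[F]_n) c :
  congruent A B -> congruent (c *: A) (c *: B).
Proof.
by case=> P [Pfree Pfull E]; exists P; rewrite -E -scalemxAr -scalemxAl.
Qed.

Lemma congruent_scale_sqr n (A : 'M[F]_n) x :
  x != 0 -> congruent (x ^+ 2 *: A) A.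
Proof.
move=> x0; apply/congruentP; exists x^-1%:M, x%:M.
rewrite -!scalar_mxM mulVf // mulfV //; split=> //.
rewrite tr_scalar_mx mul_scalar_mx mul_mx_scalar !scalerA.
by rewrite mulrA -expr2 -exprMn mulVf // expr1n scale1r.
Qed.

Lemma congruent_block_swap m n (A : 'M[F]_m) (B : 'M[F]_n) :
  congruent (block_mx A 0 0 B) (block_mx B 0 0 A).
Proof.
apply/congruentP; exists (block_mx 0 1%:M 1%:M 0), (block_mx 0 1%:M 1%:M 0).
by rewrite tr_block_mx !trmx0 !trmx1 !mulmx_block !mulmx0 !mul0mx !mulmx1
  !mul1mx !addr0 !add0r -!scalar_mx_block.
Qed.

Lemma congruent_block_basis n (D : 'M[F]_n) p q p' q' x11 x12 x21 x22 :
  x11 * x22 - x12 * x21 != 0 ->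
  p * x11 ^+ 2 + q * x21 ^+ 2 = p' ->
  p * x11 * x12 + q * x21 * x22 = 0 ->
  p * x12 ^+ 2 + q * x22 ^+ 2 = q' ->
  congruent (block_mx (p *: D) 0 0 (q *: D)) (block_mx (p' *: D) 0 0 (q' *: D)).
Proof.
set det := x11 * x22 - x12 * x21 => det0 E1 E2 E3; apply/congruentP.
exists (block_mx x11%:M x12%:M x21%:M x22%:M),
  (det^-1 *: block_mx x22%:M (- x12)%:M (- x21)%:M x11%:M); split.
- rewrite -scalemxAr mulmx_block -!scalar_mxM -!raddfD /=.
  have -> : x11 * x22 + x12 * - x21 = det by rewrite /det; ring.
  have -> : x21 * - x12 + x22 * x11 = det by rewrite /det; ring.
  have -> : x11 * - x12 + x12 * x11 = 0 by ring.
  have -> : x21 * x22 + x22 * - x21 = 0 by ring.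
  by rewrite raddf0 -scalar_mx_block scale_scalar_mx mulVf.
- rewrite -scalemxAl mulmx_block -!scalar_mxM -!raddfD /=.
  have -> : x22 * x11 + - x12 * x21 = det by rewrite /det; ring.
  have -> : - x21 * x12 + x11 * x22 = det by rewrite /det; ring.
  have -> : x22 * x12 + - x12 * x22 = 0 by ring.
  have -> : - x21 * x11 + x11 * x21 = 0 by ring.
  by rewrite raddf0 -scalar_mx_block scale_scalar_mx mulVf.
- rewrite tr_block_mx !tr_scalar_mx !mulmx_block ?mulmx0 ?mul0mx ?addr0 ?add0r.
  rewrite !mul_scalar_mx !mul_mx_scalar !scalerA -!scalerDl.
  have -> : x11 * x11 * p + x21 * x21 * q = p' by rewrite -E1; ring.
  have -> : x12 * x12 * p + x22 * x22 * q = q' by rewrite -E3; ring.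
  have -> : x12 * x11 * p + x22 * x21 * q = 0 by rewrite -E2; ring.
  have -> : x11 * x12 * p + x21 * x22 * q = 0 by rewrite -E2; ring.
  by rewrite !scale0r.
Qed.

End Congruence.

Lemma congruent_map (F K : fieldType) (iota : {rmorphism F -> K}) m n
    (A : 'M[F]_m) (B : 'M[F]_n) :
  congruent A B -> congruent (map_mx iota A) (map_mx iota B).
Proof.
move=> /congruentP[P [Q [PQ QP E]]]; apply/congruentP.
exists (map_mx iota P), (map_mx iota Q).
split; first by rewrite -map_mxM PQ map_mx1.
  by rewrite -map_mxM QP map_mx1.
by rewrite map_trmx -!map_mxM E.
Qed.

Section Isometry.
Variable F : fieldType.
Implicit Types d e : seq F.

Definition scaled (c : F) d := map (fun x => c * x) d.

Lemma size_scaled c d : size (scaled c d) = size d.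
Proof. exact: size_map. Qed.

Lemma scaled_cat c d e : scaled c (d ++ e) = scaled c d ++ scaled c e.
Proof. exact: map_cat. Qed.

Lemma scaledA c c' d : scaled c (scaled c' d) = scaled (c * c') d.
Proof. by rewrite /scaled -map_comp; apply: eq_map => x /=; rewrite mulrA. Qed.

Lemma scaled1 d : scaled 1 d = d.
Proof. by rewrite /scaled (eq_map (@mul1r _)) map_id. Qed.

Lemma isometric_congruent d e :
  isometric d e <-> congruent (diagf d) (diagf e).
Proof.
split=> [[_ [P [Pfree [Pfull E]]]]|[P [Pfree Pfull E]]].
  by exists P; split.
split; last by exists P.
exact: etrans (esym (eqP Pfree)) (eqP Pfull).
Qed.

Lemma isometric_refl d : isometric d d.
Proof. exact/isometric_congruent/congruent_refl. Qed.

Lemma isometric_sym d e : isometric d e -> isometric e d.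
Proof. by move=> /isometric_congruent/congruent_sym/isometric_congruent. Qed.

Lemma isometric_trans d1 d2 d3 :
  isometric d1 d2 -> isometric d2 d3 -> isometric d1 d3.
Proof.
move=> /isometric_congruent h12 /isometric_congruent h23.
exact/isometric_congruent/(congruent_trans h12 h23).
Qed.

Lemma diagf_cat d e : diagf (d ++ e) =
  castmx (esym (size_cat d e), esym (size_cat d e))
    (block_mx (diagf d) 0 0 (diagf e)).
Proof.
have diag_mx_cast n n' (en : n = n') (r : 'rV[F]_n) :
    diag_mx (castmx (erefl 1%N, en) r) = castmx (en, en) (diag_mx r).
  by case: n' / en; rewrite !castmx_id.
rewrite /diagf -diag_mx_row -diag_mx_cast; congr diag_mx.
apply/rowP => i; rewrite castmxE !mxE /=.
case: splitP => k /= ->; rewrite !mxE nth_cat ?ltn_ord //.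
by rewrite ltnNge leq_addr /= addKn.
Qed.

Lemma diagf_scaled c d : diagf (scaled c d) =
  castmx (esym (size_scaled c d), esym (size_scaled c d)) (c *: diagf d).
Proof.
apply/matrixP => i j; rewrite castmxE !mxE /=.
rewrite (inj_eq (@cast_ord_inj _ _ _)); case: eqP => _; last by rewrite mulr0.
by rewrite (nth_map 0) // -(size_scaled c d).
Qed.

Lemma block_castmx m1 m1' m2 m2' (e1 : m1 = m1') (e2 : m2 = m2')
    (A : 'M[F]_m1) (B : 'M[F]_m2) :
  block_mx (castmx (e1, e1) A) 0 0 (castmx (e2, e2) B) =
  castmx (f_equal2 addn e1 e2, f_equal2 addn e1 e2) (block_mx A 0 0 B).
Proof. by case: m1' / e1; case: m2' / e2; rewrite !castmx_id. Qed.

Lemma isometric_cat d1 d2 e1 e2 :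
  isometric d1 e1 -> isometric d2 e2 -> isometric (d1 ++ d2) (e1 ++ e2).
Proof.
move=> /isometric_congruent h1 /isometric_congruent h2.
apply/isometric_congruent; rewrite !diagf_cat.
exact/congruent_cast/congruent_block.
Qed.

Lemma isometric_catC d e : isometric (d ++ e) (e ++ d).
Proof.
apply/isometric_congruent; rewrite !diagf_cat.
exact/congruent_cast/congruent_block_swap.
Qed.

Lemma isometric_scaled c d e :
  isometric d e -> isometric (scaled c d) (scaled c e).
Proof.
move=> /isometric_congruent h; apply/isometric_congruent.
by rewrite !diagf_scaled; apply/congruent_cast/congruent_scale.
Qed.

Lemma isometric_scaled_sqr x d : x != 0 -> isometric (scaled (x ^+ 2) d) d.
Proof.
move=> x0; apply/isometric_congruent; rewrite diagf_scaled.
have := congruent_cast (esym (size_scaled (x ^+ 2) d)) (erefl (size d))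
  (congruent_scale_sqr (diagf d) x0).
by rewrite castmx_id.
Qed.

Lemma isometric_scaled_basis d p q p' q' x11 x12 x21 x22 :
  x11 * x22 - x12 * x21 != 0 ->
  p * x11 ^+ 2 + q * x21 ^+ 2 = p' ->
  p * x11 * x12 + q * x21 * x22 = 0 ->
  p * x12 ^+ 2 + q * x22 ^+ 2 = q' ->
  isometric (scaled p d ++ scaled q d) (scaled p' d ++ scaled q' d).
Proof.
move=> det0 E1 E2 E3; apply/isometric_congruent.
rewrite !diagf_cat !diagf_scaled !block_castmx.
apply/congruent_cast/congruent_cast; exact: congruent_block_basis E1 E2 E3.
Qed.

End Isometry.

Lemma isometric_map (F K : fieldType) (iota : {rmorphism F -> K})
    (d e : seq F) :
  isometric d e -> isometric (map iota d) (map iota e).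
Proof.
have diagf_map (s : seq F) : diagf (map iota s) =
    castmx (esym (size_map iota s), esym (size_map iota s))
      (map_mx iota (diagf s)).
  apply/matrixP => i j; rewrite castmxE !mxE /=.
  rewrite (inj_eq (@cast_ord_inj _ _ _)).
  case: eqP => _; last by rewrite rmorph0.
  by rewrite (nth_map 0) ?rmorph_nat // -(size_map iota s).
move=> /isometric_congruent h; apply/isometric_congruent.
by rewrite !diagf_map; apply/congruent_cast/congruent_map.
Qed.

Section Values.
Variable F : fieldType.
Implicit Types (d e : seq F) (f g : nat -> F).

(* Vectors of F^(size d) are encoded as functions nat -> F, of which only the
   first size d values matter; this avoids casts between row-vector types
   when forms are concatenated. *)
Definition qval d f := \sum_(0 <= i < size d) d`_i * f i ^+ 2.

Definition zero_on n f := forall i, (i < n)%N -> f i = 0.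

Definition aniso d := forall f, qval d f = 0 -> zero_on (size d) f.

Definition represents d x := exists f, qval d f = x.

Definition rowf n (v : 'rV[F]_n) : nat -> F :=
  fun i => if insub i is Some k then v 0 k else 0.

Lemma rowfE n (v : 'rV[F]_n) (k : 'I_n) : rowf v k = v 0 k.
Proof. by rewrite /rowf valK. Qed.

Lemma rowf_row n f i : (i < n)%N -> rowf (\row_(k < n) f k) i = f i.
Proof. by move=> lt_in; rewrite /rowf insubT /= mxE. Qed.

Lemma rowf_eq0 n (v : 'rV[F]_n) : zero_on n (rowf v) -> v = 0.
Proof. by move=> z; apply/rowP => k; rewrite [RHS]mxE -rowfE z. Qed.

Lemma eq_qval d f g :
  (forall i, (i < size d)%N -> f i = g i) -> qval d f = qval d g.
Proof. by move=> fg; apply: eq_big_nat => i /andP[_ lt_id]; rewrite fg. Qed.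

Lemma qval_zero_on d f : zero_on (size d) f -> qval d f = 0.
Proof.
move=> z; rewrite /qval big_nat big1 // => i /andP[_ lt_id].
by rewrite z // expr0n mulr0.
Qed.

Lemma qval0 d : qval d (fun=> 0) = 0.
Proof. exact: qval_zero_on. Qed.

Lemma bval_qval d (v : 'rV_(size d)) : bval v = qval d (rowf v).
Proof.
rewrite /bval /qval big_mkord /diagf mul_mx_diag mxE; apply: eq_bigr => i _.
by rewrite !mxE rowfE mulrCA -mulrA.
Qed.

Lemma qval_bval d f : qval d f = bval (\row_(k < size d) f k).
Proof. by rewrite bval_qval; apply: eq_qval => i lt_id; rewrite rowf_row. Qed.

Lemma anisotropicP d : anisotropic d <-> aniso d.
Proof.
split=> [an f fd0 i lt_id|an v v0].
  have : \row_(k < size d) f k = 0.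
    by apply/eqP; apply: contraT => /an; rewrite -qval_bval fd0 eqxx.
  by move/rowP/(_ (Ordinal lt_id)); rewrite !mxE.
by apply: contra v0; rewrite bval_qval => /eqP /an /rowf_eq0 ->.
Qed.

Lemma inQ_represents d x : inQ d x -> represents d x.
Proof.
case=> [->|[v [_ <-]]]; last by exists (rowf v); rewrite bval_qval.
by exists (fun=> 0); rewrite qval0.
Qed.

Lemma isometric_represents d e x :
  isometric d e -> represents d x -> represents e x.
Proof.
move=> /isometric_sym[_ [P [_ [_ E]]]] [f <-].
exists (rowf (\row_(k < size d) f k *m P^T)).
by rewrite -bval_qval qval_bval /bval -E trmx_mul trmxK !mulmxA.
Qed.

Lemma qval_delta d i t :
  (i < size d)%N -> qval d (fun j => (j == i)%:R * t) = d`_i * t ^+ 2.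
Proof.
move=> lt_id; rewrite /qval big_mkord (bigD1 (Ordinal lt_id)) //= eqxx mul1r.
rewrite big1 ?addr0 // => j ji; case: eqP => [ji'|_].
  by move: ji; rewrite -(inj_eq val_inj) /= ji' eqxx.
by rewrite mul0r expr0n mulr0.
Qed.

Lemma represents_nth d i : (i < size d)%N -> represents d d`_i.
Proof.
move=> lt_id; exists (fun j => (j == i)%:R * 1).
by rewrite qval_delta // expr1n mulr1.
Qed.

Lemma qval_scaled c d f : qval (scaled c d) f = c * qval d f.
Proof.
rewrite /qval mulr_sumr size_scaled.
by apply: eq_big_nat => i /andP[_ lt_id]; rewrite (nth_map 0) // mulrA.
Qed.

Lemma qval_cat d e f :
  qval (d ++ e) f = qval d f + qval e (fun i => f (size d + i)%N).
Proof.
rewrite /qval size_cat (@big_cat_nat _ _ _ (size d)) ?leq_addr //=.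
congr (_ + _).
  by apply: eq_big_nat => i /andP[_ lt_id]; rewrite nth_cat lt_id.
rewrite -{1}[size d]add0n big_addn addKn; apply: eq_bigr => i _.
by rewrite nth_cat ltnNge leq_addl /= addnK addnC.
Qed.

Definition catf n f g i := if (i < n)%N then f i else g (i - n)%N.

Lemma qval_catf d e f g :
  qval (d ++ e) (catf (size d) f g) = qval d f + qval e g.
Proof.
rewrite qval_cat; congr (_ + _); apply: eq_qval => i lt_i; rewrite /catf.
  by rewrite lt_i.
by rewrite ltnNge leq_addr /= addKn.
Qed.

Lemma zero_on_catf n m f g :
  zero_on (n + m) (catf n f g) -> zero_on n f /\ zero_on m g.
Proof.
move=> z; split=> i lt_i.
  by have := z _ (ltn_addr _ lt_i); rewrite /catf lt_i.
have := z (n + i)%N; rewrite ltn_add2l /catf addKn.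
by rewrite (ltnNge (n + i)) leq_addr; apply.
Qed.

Lemma aniso_catP d e : aniso (d ++ e) <-> forall f g,
  qval d f + qval e g = 0 -> zero_on (size d) f /\ zero_on (size e) g.
Proof.
split=> [an f g | an f].
  by rewrite -qval_catf => /an; rewrite size_cat => /zero_on_catf.
rewrite qval_cat => /an[z1 z2] i; rewrite size_cat => lt_i.
have [lt_id|le_di] := ltnP i (size d); first exact: z1.
by rewrite -(subnKC le_di) z2 // -(ltn_add2l (size d)) subnKC.
Qed.

Lemma qvalZr d f c : qval d (fun i => f i * c) = qval d f * c ^+ 2.
Proof.
rewrite /qval mulr_suml; apply: eq_bigr => i _.
by rewrite exprMn mulrA.
Qed.

Hypothesis ch2 : 2%N \in [pchar F].

Lemma qvalD d f g : qval d f + qval d g = qval d (fun i => f i + g i).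
Proof.
rewrite /qval -big_split /=; apply: eq_bigr => i _.
by rewrite sqrrD mulr2n addrr_pchar2 // addr0 mulrDr.
Qed.

End Values.

Lemma qval_map (F K : fieldType) (iota : {rmorphism F -> K}) (d : seq F) f :
  qval (map iota d) (fun i => iota (f i)) = iota (qval d f).
Proof.
rewrite /qval rmorph_sum size_map.
apply: eq_big_nat => i /andP[_ lt_id].
by rewrite (nth_map 0) // rmorphM rmorphXn.
Qed.

Section Pfister.
Variable F : fieldType.
Implicit Types (s : seq F) (f g : nat -> F).

Lemma pfister_cons x s :
  pfister (x :: s) = pfister s ++ scaled x (pfister s).
Proof. by []. Qed.

Lemma size_pfister s : size (pfister s) = (2 ^ size s)%N.
Proof.
by elim: s => //= x s IH; rewrite size_cat size_map IH expnS mul2n addnn.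
Qed.

Lemma nth0_pfister s : (pfister s)`_0 = 1.
Proof. by elim: s => //= x s IH; rewrite nth_cat size_pfister expn_gt0 IH. Qed.

Lemma qval_pfister_cons x s f :
  qval (pfister (x :: s)) f =
  qval (pfister s) f +
    x * qval (pfister s) (fun i => f (size (pfister s) + i)%N).
Proof. by rewrite pfister_cons qval_cat qval_scaled. Qed.

Lemma isometric_pfister_cons x s1 s2 :
  isometric (pfister s1) (pfister s2) ->
  isometric (pfister (x :: s1)) (pfister (x :: s2)).
Proof. by move=> iso12; apply: isometric_cat (isometric_scaled x iso12). Qed.

Lemma isometric_pfister_ones r s1 s2 :
  isometric (pfister s1) (pfister s2) ->
  isometric (pfister (nseq r 1 ++ s1)) (pfister (nseq r 1 ++ s2)).
Proof. by move=> iso12; elim: r => //= r; apply: isometric_pfister_cons. Qed.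

Lemma pfister_swap x y s :
  isometric (pfister (x :: y :: s)) (pfister (y :: x :: s)).
Proof.
rewrite !pfister_cons !scaled_cat !scaledA (mulrC x y) -!catA.
apply: isometric_cat (isometric_refl _) _; rewrite !catA.
exact: isometric_cat (isometric_catC _ _) (isometric_refl _).
Qed.

Lemma pfister_round s f : qval (pfister s) f != 0 ->
  isometric (scaled (qval (pfister s) f) (pfister s)) (pfister s).
Proof.
elim: s f => [|x s IH] f.
  rewrite /qval big_nat1 mul1r => f0.
  by apply: isometric_scaled_sqr; apply: contraNneq f0 => ->; rewrite expr0n.
set c := pfister s; rewrite qval_pfister_cons -/c pfister_cons -/c.
set u := qval c f; set w := qval c _ => uxw0.
rewrite scaled_cat scaledA.
have [w0|w0] := eqVneq w 0.
  rewrite w0 mulr0 addr0 in uxw0 *; rewrite mulrC -scaledA.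
  exact: isometric_cat (IH f uxw0) (isometric_scaled x (IH f uxw0)).
have IHw := IH _ w0.
have [u0|u0] := eqVneq u 0.
  rewrite u0 add0r in uxw0 *.
  have x0 : x != 0 by apply: contraNneq uxw0 => ->; rewrite mul0r.
  apply: isometric_trans (isometric_catC _ _).
  apply: isometric_cat; first by rewrite -scaledA; apply: isometric_scaled.
  rewrite (_ : x * w * x = x ^+ 2 * w); last by ring.
  by rewrite -scaledA; apply: isometric_trans (isometric_scaled_sqr _ x0) IHw.
have IHu := IH _ u0; apply: isometric_sym.
apply: (@isometric_trans _ _ (scaled u c ++ scaled (x * w) c)).
  apply: isometric_cat; first exact: isometric_sym.
  by rewrite -scaledA; apply/isometric_scaled/isometric_sym.
(* The change of basis (e, f) |-> (e + f, x w e - u f) of <u, x w>. *)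
apply: (isometric_trans (@isometric_scaled_basis _ c u (x * w) (u + x * w)
  (u * (x * w) * (u + x * w)) 1 (x * w) 1 (- u) _ _ _ _)); try by ring.
  by rewrite mul1r mulr1 -opprD oppr_eq0.
apply: isometric_cat (isometric_refl _) _.
have -> : scaled (u * (x * w) * (u + x * w)) c =
          scaled ((u + x * w) * x) (scaled u (scaled w c)).
  by rewrite !scaledA; congr scaled; ring.
apply: isometric_scaled.
exact: isometric_trans (isometric_scaled u IHw) IHu.
Qed.

Lemma pfister_qvalM s f g :
  exists h, qval (pfister s) f * qval (pfister s) g = qval (pfister s) h.
Proof.
have [f0|f0] := eqVneq (qval (pfister s) f) 0.
  by exists (fun=> 0); rewrite f0 mul0r qval0.
have : represents (scaled (qval (pfister s) f) (pfister s))
                  (qval (pfister s) f * qval (pfister s) g).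
  by exists g; rewrite qval_scaled.
by move=> /(isometric_represents (pfister_round f0))[h <-]; exists h.
Qed.

Lemma aniso_pfister_behead x s : aniso (pfister (x :: s)) -> aniso (pfister s).
Proof.
move=> /aniso_catP an f f0; apply: (proj1 (an f (fun=> 0) _)).
by rewrite f0 qval0 add0r.
Qed.

Lemma aniso_pfister_neq0 s : aniso (pfister s) -> all (fun x => x != 0) s.
Proof.
elim: s => //= x s IH an.
rewrite IH ?andbT; last exact: aniso_pfister_behead an.
apply/eqP => x0; move/aniso_catP: an => /(_ (fun=> 0) (fun j => (j == 0%N)%:R)).
rewrite qval0 qval_scaled x0 mul0r addr0 => /(_ erefl)[_ /(_ 0%N)].
rewrite size_scaled size_pfister expn_gt0 /= => /(_ isT) /eqP.
by rewrite oner_eq0.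
Qed.

Hypothesis ch2 : 2%N \in [pchar F].

Lemma represents_pfister_ones r s x :
  represents (pfister (nseq r 1 ++ s)) x <-> represents (pfister s) x.
Proof.
elim: r => // r <-; rewrite [nseq _ _ ++ _]/=; set c := pfister (nseq r 1 ++ s).
split=> [[f <-]|[f <-]].
  exists (fun i => f i + f (size c + i)%N).
  by rewrite qval_pfister_cons mul1r (qvalD ch2).
exists (catf (size c) f (fun=> 0)).
by rewrite pfister_cons qval_catf qval0 addr0.
Qed.

Section ConsScaled.
Variables (y : F) (s : seq F) (f1 f2 : nat -> F).
Let c := pfister s.
Let alpha := qval c f1 + y * qval c f2.

Lemma pfister_qval_cons_scaled p q : exists p' q',
  [/\ qval c p + alpha * qval c q = qval c p' + y * qval c q',
      qval c q' = qval c f2 * qval c q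
    & qval c p' = qval c p + qval c f1 * qval c q].
Proof.
have [q1 e1] := pfister_qvalM s f1 q; have [q2 e2] := pfister_qvalM s f2 q.
exists (fun i => p i + q1 i), q2; rewrite -(qvalD ch2) -e1 -e2 /alpha.
by split=> //; ring.
Qed.

Lemma represents_pfister_cons_scaled h :
  represents (pfister (y :: s)) (qval (c ++ scaled alpha c) h).
Proof.
rewrite qval_cat qval_scaled.
have [p' [q' [-> _ _]]] :=
  pfister_qval_cons_scaled h (fun i => h (size c + i)%N).
by exists (catf (size c) p' q'); rewrite pfister_cons qval_catf qval_scaled.
Qed.

Lemma aniso_pfister_cons_scaled :
  aniso (pfister (y :: s)) -> qval c f2 != 0 -> aniso (c ++ scaled alpha c).
Proof.
move=> an w0; have anc : aniso c := aniso_pfister_behead an.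
apply/aniso_catP => p q; rewrite qval_scaled.
have [p' [q' [-> Eq' Ep']]] := pfister_qval_cons_scaled p q.
move: an; rewrite pfister_cons => /aniso_catP an; rewrite -(qval_scaled y).
move=> /an[zp']; rewrite size_scaled => zq'.
have /anc zq : qval c q = 0.
  apply/eqP; move: (qval_zero_on zq'); rewrite Eq' => /eqP.
  by rewrite mulf_eq0 (negPf w0).
rewrite size_scaled; split=> //; apply: anc.
by rewrite -(qval_zero_on zp') Ep' (qval_zero_on zq) mulr0 addr0.
Qed.

End ConsScaled.

End Pfister.

Section MapPfister.
Variables (F K : fieldType) (iota : {rmorphism F -> K}).

Lemma map_scaled c (d : seq F) :
  map iota (scaled c d) = scaled (iota c) (map iota d).
Proof.
by rewrite /scaled -!map_comp; apply: eq_map => x /=; rewrite rmorphM.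
Qed.

Lemma map_pfister (s : seq F) : map iota (pfister s) = pfister (map iota s).
Proof.
elim: s => [|x s IH]; first by rewrite /= rmorph1.
by rewrite [map _ (_ :: _)]/= !pfister_cons map_cat map_scaled IH.
Qed.

End MapPfister.

Section QuadraticExtension.
Variables (F K : fieldType) (iota : {rmorphism F -> K}).
Hypothesis ch2 : 2%N \in [pchar F].
Variables (alpha : F) (t : K).
Hypothesis t2 : t ^+ 2 = iota alpha.
Hypothesis Kgen : forall x : K, exists u v : F, x = iota u + iota v * t.

Let chK : 2%N \in [pchar K] := rmorph_pchar iota ch2.

Lemma qval_map_sqrt (d : seq F) (z : nat -> K) : exists h,
  qval (map iota d) z = iota (qval (d ++ scaled alpha d) h) /\
  (zero_on (size (d ++ scaled alpha d)) h -> zero_on (size d) z).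
Proof.
have ex i : exists uv : F * F, z i == iota uv.1 + iota uv.2 * t.
  by have [u [v ->]] := Kgen (z i); exists (u, v).
pose p i := (xchoose (ex i)).1; pose q i := (xchoose (ex i)).2.
have zE i : z i = iota (p i) + iota (q i) * t by exact/eqP/(xchooseP (ex i)).
exists (catf (size d) p q); split.
  have -> : qval (map iota d) z =
            qval (map iota d) (fun i => iota (p i) + iota (q i) * t).
    by apply: eq_qval => i _; exact: zE.
  rewrite -(qvalD chK) qvalZr !qval_map t2 qval_catf qval_scaled.
  by rewrite rmorphD rmorphM mulrC.
rewrite size_cat size_scaled => /zero_on_catf[zp zq] i lt_id.
by rewrite zE zp // zq // rmorph0 mul0r addr0.
Qed.

Lemma aniso_map_sqrt (d : seq F) :
  aniso (d ++ scaled alpha d) -> aniso (map iota d).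
Proof.
move=> an z z0; have [h [zh hz]] := qval_map_sqrt d z.
by rewrite size_map; apply/hz/an/eqP; rewrite -(fmorph_eq0 iota) -zh z0.
Qed.

Definition subvalues (d : seq F) (e : seq K) :=
  forall z, exists r, qval e z = iota (qval d r).

Lemma subvalues_pfister_cons y s g : subvalues (pfister s) (pfister g) ->
  subvalues (pfister (y :: s)) (pfister (iota y :: g)).
Proof.
move=> sub z; have [r1 e1] := sub z.
have [r2 e2] := sub (fun i => z (size (pfister g) + i)%N).
exists (catf (size (pfister s)) r1 r2).
rewrite [LHS]qval_pfister_cons e1 e2 pfister_cons qval_catf qval_scaled.
by rewrite rmorphD rmorphM.
Qed.

Lemma aniso_pfister_cons_map y s g :
  aniso (pfister (y :: s)) -> aniso (pfister g) ->
  subvalues (pfister s) (pfister g) -> aniso (pfister (iota y :: g)).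
Proof.
move=> /aniso_catP an ang sub; apply/aniso_catP => z1 z2.
have [r1 e1] := sub z1; have [r2 e2] := sub z2.
rewrite qval_scaled e1 e2 -rmorphM -rmorphD => /eqP; rewrite fmorph_eq0.
rewrite -qval_scaled => /eqP /an[/qval_zero_on r10]; rewrite size_scaled => /qval_zero_on r20.
by rewrite size_scaled; split; apply: ang; rewrite ?e1 ?e2 ?r10 ?r20 rmorph0.
Qed.

Lemma isometric_map_pfister_scaled s y f1 f2 :
  y != 0 -> qval (pfister s) f2 != 0 ->
  qval (pfister s) f1 + y * qval (pfister s) f2 = alpha ->
  isometric (scaled (iota y) (pfister (map iota s))) (pfister (map iota s)).
Proof.
set w := qval _ f2 => y0 w0 ha.
set cK := pfister (map iota s).
have round_w : isometric (scaled (iota w) cK) cK.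
  by rewrite /cK -map_pfister -map_scaled; apply/isometric_map/pfister_round.
(* In characteristic 2, iota (y w) = iota (qval (pfister s) f1) + t^2 is the
   value of c_K at f1 + t e_0. *)
have yw : qval cK (fun i => iota (f1 i) + (i == 0%N)%:R * t) = iota (y * w).
  have s0 : (0 < size (pfister s))%N by rewrite size_pfister expn_gt0.
  rewrite -(qvalD chK) /cK -map_pfister qval_map qval_delta ?size_map //.
  rewrite (nth_map 0) // nth0_pfister rmorph1 mul1r t2 -rmorphD -ha.
  by rewrite addrA addrr_pchar2 // add0r.
have yw0 : iota (y * w) != 0 by rewrite fmorph_eq0 mulf_neq0.
rewrite -yw in yw0; apply: isometric_trans (pfister_round yw0).
rewrite yw rmorphM -scaledA; apply: isometric_scaled.
exact: isometric_sym round_w.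
Qed.

Hypothesis nsq : ~ exists x : F, x ^+ 2 = alpha.

Lemma pfister_map_sqrt_decomp s f :
  aniso (pfister s) -> qval (pfister s) f = alpha ->
  exists g : seq K, [/\ aniso (pfister g),
    isometric (pfister (map iota s)) (pfister (1 :: g))
    & subvalues (pfister s) (pfister g)].
Proof.
elim: s f => [|y s IH] f an.
  by rewrite /qval big_nat1 mul1r => f0; case: nsq; exists (f 0%N).
rewrite qval_pfister_cons; set c := pfister s.
set f2 := fun i => _; set w := qval c f2.
have [w0|w0] := eqVneq w 0.
  rewrite w0 mulr0 addr0 => /(IH f (aniso_pfister_behead an)).
  case=> g [ang isog subg].
  exists (iota y :: g); split.
  - exact: (aniso_pfister_cons_map an ang subg).
  - exact: isometric_trans (isometric_pfister_cons _ isog) (pfister_swap _ _ _).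
  - exact: subvalues_pfister_cons.
move=> ha; have /andP[y0 _] := aniso_pfister_neq0 an.
exists (map iota s); split.
- rewrite -map_pfister; apply: aniso_map_sqrt; rewrite -ha.
  exact: aniso_pfister_cons_scaled.
- rewrite [map _ _]/= !pfister_cons scaled1.
  exact/isometric_cat/(isometric_map_pfister_scaled y0 w0 ha)/isometric_refl.
- move=> z; rewrite -map_pfister; have [h [-> _]] := qval_map_sqrt c z.
  have [r e] := represents_pfister_cons_scaled ch2 y s f f2 h.
  by exists r; rewrite e ha.
Qed.

End QuadraticExtension.

Section IndexUniqueness.
Variable F : fieldType.
Hypothesis ch2 : 2%N \in [pchar F].

Lemma sqr_sum_char2 (I : finType) (g : I -> F) : (\sum_i g i) ^+ 2 = \sum_i g i ^+ 2.
Proof. by rewrite -!(pFrobenius_autE ch2) rmorph_sum. Qed.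

Lemma qval_mulmx m (e : seq F) (C : 'M[F]_(m, size e)) (v : 'rV[F]_m) :
  \sum_(i < m) qval e (rowf (row i C)) * v 0 i ^+ 2 = qval e (rowf (v *m C)).
Proof.
rewrite /qval big_mkord; under eq_bigr => i _ do rewrite big_mkord mulr_suml.
rewrite exchange_big /=; apply: eq_bigr => j _.
rewrite rowfE mxE sqr_sum_char2 mulr_sumr; apply: eq_bigr => i _.
by rewrite rowfE !mxE exprMn; ring.
Qed.

(* Write the coefficients of d as the values of e at the rows of C; since
   squaring is additive, a nonzero v with v C = 0 is isotropic for d. *)
Lemma aniso_size_le (d e : seq F) : aniso d ->
  (forall i, (i < size d)%N -> represents e d`_i) -> (size d <= size e)%N.
Proof.
move=> an rep; rewrite leqNgt; apply/negP => lt_ed.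
have [C rowC] : exists C : 'M[F]_(size d, size e),
    forall i, qval e (rowf (row i C)) = d`_i.
  have /fin_all_exists[c qc] (i : 'I_(size d)) :
      exists v : 'rV[F]_(size e), qval e (rowf v) = d`_i.
    have [f <-] := rep i (ltn_ord i); exists (\row_(k < size e) f k).
    by apply: eq_qval => k lt_k; rewrite rowf_row.
  by exists (\matrix_i c i) => i; rewrite rowK qc.
have /rowV0Pn[v /sub_kermxP vC] : kermx C != 0.
  rewrite -mxrank_eq0 mxrank_ker subn_eq0 -ltnNge.
  exact: leq_ltn_trans (rank_leq_col C) lt_ed.
apply/negP; rewrite negbK; apply/eqP/rowf_eq0/an.
have -> : qval d (rowf v) = qval e (rowf (v *m C)).
  rewrite -qval_mulmx [qval d _]/qval big_mkord; apply: eq_bigr => i _.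
  by rewrite rowC rowfE.
rewrite vC; apply: qval_zero_on => i _.
by rewrite /rowf; case: insub => // k; rewrite mxE.
Qed.

Lemma pfister_index_unique (d : seq F) r1 r2 :
  pfister_index d r1 -> pfister_index d r2 -> r1 = r2.
Proof.
have le_size r r' (b b' : seq F) : anisotropic (pfister b) ->
    isometric d (pfister (nseq r 1 ++ b)) ->
    isometric d (pfister (nseq r' 1 ++ b')) -> (size b <= size b')%N.
  move=> /anisotropicP an iso iso'; rewrite -(@leq_exp2l 2) // -!size_pfister.
  apply: aniso_size_le an _ => i lt_i.
  apply/(represents_pfister_ones ch2 r'); apply: isometric_represents iso' _.
  apply: isometric_represents (isometric_sym iso) _.
  exact/(represents_pfister_ones ch2 r)/represents_nth.
case=> [b1 [_ [an1 iso1]]] [b2 [_ [an2 iso2]]].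
have eb : size b1 = size b2.
  apply/eqP; rewrite eqn_leq (le_size _ _ _ _ an1 iso1 iso2).
  exact: le_size an2 iso2 iso1.
case: iso1 iso2 => [s1 _] [s2 _]; move: s2; rewrite s1.
by rewrite !size_pfister !size_cat !size_nseq eb => /(expnI (ltnSn 1)) /addIn.
Qed.

End IndexUniqueness.

Unset Implicit Arguments.
Set Strict Implicit.

Theorem lemma4p11 (F K : fieldType) (iota : {rmorphism F -> K})
    (n : nat) (a : seq F) (alpha : F) (beta : K) :
  2%N \in [pchar F] ->
  size a = n ->
  all (fun x => x != 0) a ->
  inQ (pfister a) alpha ->
  ~ (exists x : F, x ^+ 2 = alpha) ->
  beta ^+ 2 = iota alpha ->
  (forall x : K, exists u v : F, x = iota u + iota v * beta) ->
  (forall r : nat, pfister_index (pfister a) r ->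
     pfister_index (pfister (map iota a)) r.+1) /\
  (forall r s : nat, pfister_index (pfister a) r ->
     pfister_index (pfister (map iota a)) s -> s = r.+1).
Proof.
move=> ch2 _ _ /inQ_represents alphaQ nsq t2 Kgen.
have index_succ r : pfister_index (pfister a) r ->
    pfister_index (pfister (map iota a)) r.+1.
  case=> b [_ [/anisotropicP anb isob]].
  have [f fb] : represents (pfister b) alpha.
    exact/(represents_pfister_ones ch2 r)/(isometric_represents isob).
  have [g [ang isog _]] := pfister_map_sqrt_decomp ch2 t2 Kgen nsq anb fb.
  exists g; split; first exact: aniso_pfister_neq0.
  split; first exact/anisotropicP.
  have := isometric_map iota isob.
  rewrite !map_pfister map_cat map_nseq rmorph1.
  move=> /isometric_trans; apply.
  have -> : nseq r.+1 1 ++ g = nseq r 1 ++ 1 :: g by elim: (r) => //= k ->.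
  exact: isometric_pfister_ones.
split=> // r s /index_succ ind_r ind_s.
have chK : 2%N \in [pchar K] := rmorph_pchar iota ch2.
exact: (pfister_index_unique chK ind_s ind_r).
Qed.
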